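(* Let $u$ be a fast decreasing distribution on $\mathbb R^D$ (acting on $\mathbb C[\boldsymbol x]$), $\mathcal Q_2\in\mathbb C[\boldsymbol x]$ of degree $m_2$ with $Z(\mathcal Q_2)\cap\operatorname{supp}u=\varnothing$, and $\check u$ a linear functional with $\mathcal Q_2\check u=u$; assume $u,\check u$ quasi-definite and let $R=\langle\check u,P(\boldsymbol x)\chi(\boldsymbol x)^\top\rangle$. Then for every $k>m_2$ there exists a poised set of multi-indices, i.e. an ordered set $\mathcal M_k=\{\boldsymbol\beta_1,\dots,\boldsymbol\beta_r\}$ of distinct multi-indices with $|\boldsymbol\beta_i|<k$, $r=N_{k-1}-N_{k-m_2-1}$, such that the $r\times r$ matrix with block rows $\big(R_{[l],\boldsymbol\beta_1},\dots,R_{[l],\boldsymbol\beta_r}\big)$, $l=k-m_2,\dots,k-1$, is nonsingular.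
   Context: $[k]=\{\boldsymbol\alpha\in\mathbb Z_+^D:|\boldsymbol\alpha|=k\}$, $|[k]|=\binom{D+k-1}{k}$, $N_k=\binom{D+k}{D}$ (with $N_{-1}=0$). Multi-indices are ordered by graded lexicographic order; $\chi(\boldsymbol x)$ is the semi-infinite vector of monomials in this order; semi-infinite matrices have blocks $A_{[k],[l]}\in\mathbb C^{|[k]|\times|[l]|}$, and for a multi-index $\boldsymbol\beta$, $A_{[l],\boldsymbol\beta}\in\mathbb C^{|[l]|}$ is the column of block row $[l]$ indexed by $\boldsymbol\beta$. For a linear functional $u$ on $\mathbb C[\boldsymbol x]$, $\langle Qu,P\rangle:=\langle u,QP\rangle$; moment matrix $G=\langle u,\chi\chi^\top\rangle$; quasi-definite: all block truncations $G^{[k]}$ nonsingular; then $G=S^{-1}HS^{-\top}$ with $S$ block lower unitriangular, $H$ block diagonal, and $P(\boldsymbol x)=S\chi(\boldsymbol x)$ are the monic multivariate orthogonal polynomials. *)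

From HB Require Import structures.
From mathcomp Require Import all_boot all_order all_algebra.
From mathcomp Require Import mpoly.
From mathcomp Require Import all_classical all_reals all_analysis.
From mathcomp Require Import complex.

Set Implicit Arguments.
Unset Strict Implicit.
Unset Printing Implicit Defensive.

Import Order.TTheory GRing.Theory Num.Theory.
Local Open Scope ring_scope.

Notation cpoly R D := (mpoly.mpoly D R[i]).
Notation mi D := (mpoly.multinom D).
Notation pt R D := 'rV[R]_D.

Section Defs.
Variables (R : realType) (D : nat).
Local Notation cpoly := (cpoly R D).
Local Notation mi := (mi D).
Local Notation pt := (pt R D).

Definition mdeg (a : mi) : nat := mpoly.mdeg a.
Definition xm (a : mi) : cpoly := mpoly.mpolyX R[i] a.

Definition mk_mi (s : seq nat) : mi := mpoly.Multinom [tuple nth 0%N s i | i < D].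

Fixpoint comps (d l : nat) : seq (seq nat) :=
  match d with
  | 0 => if l == 0%N then [:: [::]] else [::]
  | d'.+1 => flatten [seq [seq i :: s | s <- comps d' (l - i)] | i <- rev (iota 0 l.+1)]
  end.

(* [l] : multi-indices of length l, in graded lexicographic order *)
Definition mis_deg (l : nat) : seq mi := [seq mk_mi s | s <- comps D l].
Definition mis_le (n : nat) : seq mi := flatten [seq mis_deg l | l <- iota 0 n.+1].
Definition mis_range (lo cnt : nat) : seq mi :=
  flatten [seq mis_deg l | l <- iota lo cnt].

Definition mi0 : mi := mk_mi [::].

Definition Nk (k : nat) : nat := 'C(D + k, D).

Definition lin_functional (L : cpoly -> R[i]) : Prop :=
  forall (a : R[i]) (p q : cpoly), L (a *: p + q) = a * L p + L q.

(* moment matrix G = <L, chi chi^T> *)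
Definition moment (L : cpoly -> R[i]) (a b : mi) : R[i] := L (xm a * xm b).

Definition Gtrunc (L : cpoly -> R[i]) (n : nat) :
  'M[R[i]]_(size (mis_le n)) :=
  \matrix_(i, j) moment L (nth mi0 (mis_le n) i) (nth mi0 (mis_le n) j).

Definition quasi_definite (L : cpoly -> R[i]) : Prop :=
  forall n, \det (Gtrunc L n) != 0.

Definition block_lower_unitriangular (S : mi -> mi -> R[i]) : Prop :=
  forall a b, ((mdeg a < mdeg b)%N -> S a b = 0) /\
              (mdeg a = mdeg b -> S a b = (a == b)%:R).

(* H = S G S^T ; the sums are finite since S a c = 0 unless |c| <= |a| *)
Definition Hmat (L : cpoly -> R[i]) (S : mi -> mi -> R[i]) (a b : mi) : R[i] :=
  \sum_(c <- mis_le (mdeg a)) \sum_(e <- mis_le (mdeg b))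
     S a c * moment L c e * S b e.

(* G = S^{-1} H S^{-T} with S block lower unitriangular and H block diagonal *)
Definition is_LU_factor (L : cpoly -> R[i]) (S : mi -> mi -> R[i]) : Prop :=
  block_lower_unitriangular S /\
  forall a b, mdeg a <> mdeg b -> Hmat L S a b = 0.

(* monic multivariate orthogonal polynomials P = S chi *)
Definition mop (S : mi -> mi -> R[i]) (a : mi) : cpoly :=
  \sum_(c <- mis_le (mdeg a)) S a c *: xm c.

Definition Rmat (Lc : cpoly -> R[i]) (S : mi -> mi -> R[i]) (a b : mi) : R[i] :=
  Lc (mop S a * xm b).

Definition ej (i : 'I_D) : pt := delta_mx 0 i.
Definition sqn (x : pt) : R := \sum_(i < D) x ord0 i ^+ 2.

Definition dpart (s : seq 'I_D) (f : pt -> R) : pt -> R :=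
  foldr (fun i g => fun x => derive g x (ej i)) f s.

Definition smooth (f : pt -> R) : Prop :=
  forall s x, differentiable (dpart s f) x.

Definition OC (k : nat) (f : pt -> R) : Prop :=
  smooth f /\ forall s, exists M : R, forall x, `|dpart s f x| <= M * (1 + sqn x) ^+ k.

Definition OC_any (f : pt -> R) : Prop := exists k, OC k f.

(* A fast decreasing distribution u in O_C' : a (complex) linear functional on O_C
   (given by its values on real-valued test functions: u(f+ig) = u f + i u g)
   continuous for the LF topology, i.e. for every k its restriction to O_{C,k} is
   bounded by finitely many of the seminorms
   p_{k,m}(f) = sup_{|alpha|<=m} sup_x (1+|x|^2)^{-k} |d^alpha f(x)|. *)
Definition fast_decreasing (u : (pt -> R) -> R[i]) : Prop :=
  (forall (f g : pt -> R) (a : R), OC_any f -> OC_any g ->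
      u (fun x => a * f x + g x) = complex.Complex a 0 * u f + u g) /\
  (forall k, exists (m : nat) (Cst : R), forall (f : pt -> R) (B : R), OC k f ->
      (forall s x, (size s <= m)%N -> `|dpart s f x| <= B * (1 + sqn x) ^+ k) ->
      `|u f| <= complex.Complex (Cst * B) 0).

Definition in_supp (u : (pt -> R) -> R[i]) (x : pt) : Prop :=
  ~ (exists e : R, 0 < e /\ forall f : pt -> R, smooth f ->
        (forall y, e <= `|y - x| -> f y = 0) -> u f = 0).

Definition peval (x : pt) (p : cpoly) : R[i] := mpoly.meval (fun i => complex.Complex (x ord0 i) 0) p.

Definition dist_on_poly (u : (pt -> R) -> R[i]) (p : cpoly) : R[i] :=
  u (fun x => complex.Re (peval x p)) + complex.Complex 0 1 * u (fun x => complex.Im (peval x p)).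

End Defs.

From HB Require Import structures.
From mathcomp Require Import all_boot all_order all_algebra.
From mathcomp Require Import mpoly.
From mathcomp Require Import all_classical all_reals all_analysis.
From mathcomp Require Import complex.
Set Implicit Arguments.
Unset Strict Implicit.
Unset Printing Implicit Defensive.

Import Order.TTheory GRing.Theory Num.Theory.
Local Open Scope ring_scope.

(* Since P = S chi, the block rows l = k-m2, ..., k-1 of R, restricted to the
   columns |b| < k, factor as T G, where G is the truncation of the moment
   matrix of uc to degree k-1 (invertible by quasi-definiteness) and T gathers
   the corresponding rows of S, cut at degree k-1.  The columns of T indexed by
   the multi-indices of these rows form a unitriangular block, so T, hence T G,
   has full row rank r = N_(k-1) - N_(k-m2-1); any r independent columns of T G
   give a poised set. *)

Lemma mem_comps d l s : s \in comps d l -> size s = d /\ sumn s = l.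
Proof.
elim: d l s => [|d IH] l s /=.
  by case: eqP => [->|]; rewrite ?inE // => /eqP ->.
move=> /flattenP [t /mapP [i hi ->] /mapP [s' /IH [h1 h2] ->]].
rewrite /= h1 h2; split=> //.
by move: hi; rewrite mem_rev (mem_iota 0 l.+1) add0n ltnS => /subnKC.
Qed.

Lemma comps_uniq d l : uniq (comps d l).
Proof.
elim: d l => [|d IH] l /=; first by case: (l == 0%N).
have : uniq (rev (iota 0 l.+1)) by rewrite rev_uniq iota_uniq.
elim: (rev _) => [|i I IHI] //= /andP [iI uI].
rewrite cat_uniq IHI // andbT map_inj_uniq ?IH //=; last by move=> a b [].
apply/hasPn => _ /flattenP [_ /mapP [j hj ->] /mapP [s _ ->]].
by apply/mapP => -[s' _ [eji _]]; move: iI; rewrite -eji hj.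
Qed.

Lemma size_comps_S d l :
  size (comps d.+1 l) = (\sum_(j < l.+1) size (comps d j))%N.
Proof.
rewrite [comps _ _]/= size_flatten /shape -map_comp sumnE big_map big_rev.
rewrite -[0%N :: _]/(index_iota 0 l.+1) big_mkord (reindex_inj rev_ord_inj).
by apply: eq_bigr => i _; rewrite /= size_map subSS subKn // -ltnS.
Qed.

Lemma sum_size_comps d n : (\sum_(l < n.+1) size (comps d l))%N = 'C(d + n, d).
Proof.
elim: d n => [|d IH] n; first by rewrite big_ord_recl /= bin0 big1 // => i _.
elim: n => [|n IHn]; first by rewrite big_ord1 size_comps_S IH !addn0 !binn.
by rewrite big_ord_recr /= IHn size_comps_S IH [in RHS]addSn binS addSnnS addnC.
Qed.

Section MultiIndices.
Variable D : nat.
Local Notation mi := (mi D).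

Lemma mdeg_mk_mi s : size s = D -> mdeg (mk_mi D s) = sumn s.
Proof.
move=> <-; rewrite mdegE sumnE (big_nth 0%N) big_mkord.
by apply: eq_bigr => i _; rewrite mnmE.
Qed.

Lemma mk_mi_inj s t : size s = D -> size t = D -> mk_mi D s = mk_mi D t -> s = t.
Proof.
move=> hs ht /mnmP h; apply: (@eq_from_nth _ 0%N); first by rewrite hs ht.
by move=> i; rewrite hs => hi; have := h (Ordinal hi); rewrite !mnmE.
Qed.

Lemma mdeg_mis_deg l a : a \in mis_deg D l -> mdeg a = l.
Proof. by move=> /mapP [s /mem_comps [h1 h2] ->]; rewrite mdeg_mk_mi. Qed.

Lemma mis_deg_uniq l : uniq (mis_deg D l).
Proof.
rewrite map_inj_in_uniq ?comps_uniq // => s t /mem_comps [hs _] /mem_comps [ht _].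
exact: mk_mi_inj.
Qed.

Lemma mdeg_mis_range lo cnt a :
  a \in mis_range D lo cnt -> (lo <= mdeg a < lo + cnt)%N.
Proof. by move=> /flattenP [_ /mapP [l hl ->] /mdeg_mis_deg ->]; rewrite -mem_iota. Qed.

Definition mdeg_before (a b : mi) : bool := (mdeg a <= mdeg b)%N && (a != b).

Lemma pairwise_mis_deg l : pairwise mdeg_before (mis_deg D l).
Proof.
have := mis_deg_uniq l; have := @mdeg_mis_deg l.
elim: (mis_deg D l) => [|a s IHs] //= hd /andP [ha us].
rewrite IHs ?andbT //; last by move=> b hb; apply: hd; rewrite inE hb orbT.
apply/allP => b hb; rewrite /mdeg_before (hd a) ?mem_head // (hd b) ?inE ?hb ?orbT //.
by rewrite leqnn; apply: contraNneq ha => ->.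
Qed.

Lemma pairwise_mis_range lo cnt : pairwise mdeg_before (mis_range D lo cnt).
Proof.
elim: cnt lo => [|cnt IH] lo //=.
rewrite /mis_range /= pairwise_cat -/(mis_range D lo.+1 cnt) IH pairwise_mis_deg !andbT.
apply/allrelP => a b /mdeg_mis_deg da /mdeg_mis_range /andP [db _].
by rewrite /mdeg_before da ltnW //=; apply: contraTneq db => <-; rewrite da ltnn.
Qed.

Lemma mis_range_uniq lo cnt : uniq (mis_range D lo cnt).
Proof.
by apply: pairwise_uniq (pairwise_mis_range lo cnt) => a; rewrite /mdeg_before eqxx andbF.
Qed.

Lemma mis_rangeD lo c1 c2 :
  mis_range D lo (c1 + c2) = mis_range D lo c1 ++ mis_range D (lo + c1) c2.
Proof. by rewrite /mis_range iotaD map_cat flatten_cat. Qed.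

Lemma mis_leE n : mis_le D n = mis_range D 0 n.+1.
Proof. by []. Qed.

Lemma mdeg_mis_le n a : a \in mis_le D n -> (mdeg a <= n)%N.
Proof. by rewrite mis_leE => /mdeg_mis_range. Qed.

Lemma size_mis_le n : size (mis_le D n) = Nk D n.
Proof.
rewrite /mis_le size_flatten /shape -map_comp sumnE big_map /Nk -sum_size_comps.
rewrite -[iota 0 n.+1]/(index_iota 0 n.+1) big_mkord.
by apply: eq_bigr => i _; rewrite /= size_map.
Qed.

End MultiIndices.

Lemma mxrank_colsub_unit (F : fieldType) m n (g : 'I_m -> 'I_n) (M : 'M[F]_(m, n)) :
  colsub g M \in unitmx -> \rank M = m.
Proof.
move=> /mxrank_unit hg; apply/eqP; rewrite eqn_leq rank_leq_row -[X in (X <= _)%N]hg.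
by rewrite -[M in colsub _ M]mulmx1 -mulmx_colsub mxrankM_maxl.
Qed.

Lemma colsub_unit_full_rank (F : fieldType) m n (M : 'M[F]_(m, n)) :
  \rank M = m -> exists g : 'I_m -> 'I_n, injective g /\ colsub g M \in unitmx.
Proof.
move=> rM; have hfull : row_full M^T by rewrite /row_full mxrank_tr rM.
exists (fullrankfun hfull); split; first exact: fullrankfun_inj.
by rewrite -unitmx_tr trmx_mxsub fullrowsub_unit.
Qed.

Section OrthogonalPolynomials.
Variables (R : realType) (D : nat).
Local Notation cpoly := (cpoly R D).
Local Notation mi := (mi D).
Local Notation mi0 := (mi0 D).

Lemma lin_functional_sum (L : cpoly -> R[i]) (I : Type) (r : seq I)
    (F : I -> cpoly) (c : I -> R[i]) :
  lin_functional L -> L (\sum_(x <- r) c x *: F x) = \sum_(x <- r) c x * L (F x).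
Proof.
move=> hL; have L0 : L 0 = 0.
  have := hL 1 0 0; rewrite scaler0 addr0 mul1r.
  by move/(congr1 (fun z => z - L 0)); rewrite subrr addrK.
by elim: r => [|x r IH]; rewrite ?big_nil // !big_cons hL IH.
Qed.

Variable S : mi -> mi -> R[i].
Hypothesis S_unitri : block_lower_unitriangular S.

Lemma Rmat_expand (Lc : cpoly -> R[i]) (n : nat) (a b : mi) :
  lin_functional Lc -> (mdeg a <= n)%N ->
  Rmat Lc S a b = \sum_(c <- mis_le D n) S a c * moment Lc c b.
Proof.
move=> hL ha; rewrite /Rmat /mop mulr_suml.
under eq_bigr do rewrite -scalerAl.
have -> : mis_le D n = mis_le D (mdeg a) ++ mis_range D (mdeg a).+1 (n - mdeg a).
  by rewrite !mis_leE -(mis_rangeD D 0) addSn subnKC.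
rewrite lin_functional_sum // [RHS]big_cat.
rewrite [X in _ = _ + X]big1_seq ?addr0 // => c /mdeg_mis_range /andP [hc _].
by rewrite (proj1 (S_unitri a c)) ?mul0r.
Qed.

Lemma S_submx_unit (s : seq mi) :
  pairwise (@mdeg_before D) s ->
  \matrix_(i, j < size s) S (nth mi0 s i) (nth mi0 s j) \in unitmx.
Proof.
move=> /(pairwiseP mi0) hs; rewrite unitmxE det_trig.
  by rewrite big1 ?unitr1 // => i _; rewrite mxE (proj2 (S_unitri _ _)) ?eqxx.
apply/is_trig_mxP => i j hij; rewrite mxE.
have /andP [hle hne] := hs i j (ltn_ord i) (ltn_ord j) hij.
case: (ltngtP (mdeg (nth mi0 s i)) (mdeg (nth mi0 s j))) hle => // hd _.
  by rewrite (proj1 (S_unitri _ _)).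
by rewrite (proj2 (S_unitri _ _)) // (negPf hne).
Qed.

Lemma exists_poised_columns (Lc : cpoly -> R[i]) (n : nat) (A : seq mi) :
  lin_functional Lc -> quasi_definite Lc ->
  pairwise (@mdeg_before D) A -> {subset A <= mis_le D n} ->
  exists beta : 'I_(size A) -> mi,
    [/\ injective beta, forall j, beta j \in mis_le D n &
        \matrix_(i, j) Rmat Lc S (nth mi0 A i) (beta j) \in unitmx].
Proof.
move=> Lc_lin Lc_qd pwA A_sub; set L := mis_le D n.
have uniqL : uniq L by rewrite /L mis_leE mis_range_uniq.
pose T := \matrix_(i < size A, c < size L) S (nth mi0 A i) (nth mi0 L c).
pose G := Gtrunc Lc n.
have TG i j : (T *m G) i j = Rmat Lc S (nth mi0 A i) (nth mi0 L j).
  have /A_sub/mdeg_mis_le A_i_deg := mem_nth mi0 (ltn_ord i).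
  rewrite mxE (Rmat_expand _ Lc_lin A_i_deg) (big_nth mi0) big_mkord.
  by apply: eq_bigr => c _; rewrite !mxE.
have posA (j : 'I_(size A)) : (index (nth mi0 A j) L < size L)%N.
  by rewrite index_mem A_sub ?mem_nth.
have rankT : \rank T = size A.
  apply: (mxrank_colsub_unit (g := fun j => Ordinal (posA j))).
  have -> : colsub (fun j => Ordinal (posA j)) T =
            \matrix_(i, j) S (nth mi0 A i) (nth mi0 A j).
    by apply/matrixP => i j; rewrite !mxE nth_index ?A_sub ?mem_nth.
  exact: S_submx_unit.
have G_unit : G \in unitmx by rewrite unitmxE unitfE; apply: Lc_qd.
have [g [g_inj TGg_unit]] := colsub_unit_full_rank
  (etrans (mxrankMfree T (etrans (row_free_unit G) G_unit)) rankT).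
exists (fun j => nth mi0 L (g j)); split.
- by move=> j1 j2 /eqP; rewrite nth_uniq // => /eqP /val_inj /g_inj.
- by move=> j; rewrite mem_nth.
apply: etrans TGg_unit; congr (_ \in unitmx).
by apply/matrixP => i j; rewrite [LHS]mxE [RHS]mxE TG.
Qed.

End OrthogonalPolynomials.

Theorem mainTheorem4 (R : realType) (D : nat)
  (u : (pt R D -> R) -> R[i]) (Q2 : cpoly R D) (m2 : nat)
  (uc : cpoly R D -> R[i]) (Su : mi D -> mi D -> R[i]) :
  fast_decreasing u ->
  mpoly.msize Q2 = m2.+1 ->
  (forall x : pt R D, in_supp u x -> peval x Q2 <> 0) ->
  lin_functional uc ->
  (forall p : cpoly R D, uc (Q2 * p) = dist_on_poly u p) ->
  quasi_definite (dist_on_poly u) ->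
  quasi_definite uc ->
  is_LU_factor (dist_on_poly u) Su ->
  forall k : nat, (m2 < k)%N ->
  exists beta : 'I_(Nk D k.-1 - Nk D (k - m2).-1) -> mi D,
    injective beta /\
    (forall j, (mdeg (beta j) < k)%N) /\
    (\matrix_(i, j) Rmat uc Su (nth (mi0 D) (mis_range D (k - m2) m2) i) (beta j))
      \in unitmx.
Proof.
move=> _ _ _ uc_lin _ _ uc_qd [S_unitri _] k lt_m2k.
have lt0k : (0 < k)%N by apply: leq_ltn_trans lt_m2k.
set A := mis_range D (k - m2) m2.
have LE : mis_le D k.-1 = mis_le D (k - m2).-1 ++ A.
  rewrite !mis_leE !prednK ?subn_gt0 //.
  by rewrite -{1}(subnK (ltnW lt_m2k)) (mis_rangeD D 0).
have -> : (Nk D k.-1 - Nk D (k - m2).-1)%N = size A.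
  by rewrite -!size_mis_le LE size_cat addKn.
have A_sub : {subset A <= mis_le D k.-1} by move=> a; rewrite LE mem_cat orbC => ->.
have [beta [beta_inj beta_deg beta_unit]] :=
  exists_poised_columns S_unitri uc_lin uc_qd (pairwise_mis_range D _ _) A_sub.
exists beta; do !split=> //.
by move=> j; rewrite -(prednK lt0k) ltnS mdeg_mis_le.
Qed.
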